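(* Let $\Phi=\{\varphi_i\}_{i\in\Lambda}$ be a similarity IFS in $\mathbb{R}^d$ with attractor $K$. The following are equivalent: (1) $K$ is not contained in an affine hyperplane; (2) there exists a section $\Pi\subset\Lambda^*$ such that the IFS $\{\varphi_i\}_{i\in\Pi}$ is diffuse; (3) $K$ is hyperplane diffuse.
   Context: A similarity IFS is a finite family of contracting similarities of $\mathbb{R}^d$; the attractor $K$ is the nonempty compact set with $K=\bigcup_i\varphi_iK$; for $i=i_1\dots i_n\in\Lambda^*$, $\varphi_i=\varphi_{i_1}\circ\cdots\circ\varphi_{i_n}$. A section is a finite set $\Pi\subset\Lambda^*$ such that the cylinders $[i]=\{j\in\Lambda^{\mathbb{N}}: i\text{ is a prefix of }j\}$, $i\in\Pi$, are pairwise disjoint with union $\Lambda^{\mathbb{N}}$. An IFS $\{\varphi_i\}_{i\in A}$ is diffuse if there is $c>0$ such that for every affine hyperplane $\mathcal{L}$ some $i\in A$ has $\varphi_iK\cap\mathcal{L}^{(c)}=\emptyset$ ($\mathcal{L}^{(c)}$ the open $c$-neighborhood). A closed set $E$ is hyperplane diffuse if there are $\beta,\xi_0>0$ such that for all $\xi\in(0,\xi_0)$, $x\in E$ and affine hyperplanes $\mathcal{L}$, $E\cap B_\xi(x)\setminus\mathcal{L}^{(\beta\xi)}\neq\emptyset$. *)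

From HB Require Import structures.
From mathcomp Require Import all_boot all_order all_algebra.
From mathcomp Require Import all_classical all_reals all_analysis.
Set Implicit Arguments. Unset Strict Implicit. Unset Printing Implicit Defensive.
Import Order.TTheory GRing.Theory Num.Theory.
Import numFieldNormedType.Exports.
Local Open Scope classical_set_scope.
Local Open Scope ring_scope.

Section Defs.
Variables (R : realType) (d : nat).
Notation V := 'rV[R]_d.

Definition dotv (u v : V) : R := \sum_(k < d) u ord0 k * v ord0 k.
Definition enorm (x : V) : R := Num.sqrt (dotv x x).

Definition contracting_similarity (f : V -> V) : Prop :=
  exists r : R, 0 < r /\ r < 1 /\ forall x y, enorm (f x - f y) = r * enorm (x - y).

Definition is_hyperplane (L : set V) : Prop :=
  exists (a : V) (b : R), a != 0 /\ L = [set x | dotv a x = b].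

Definition open_nbhd (L : set V) (c : R) : set V :=
  [set x | exists2 y, L y & enorm (x - y) < c].

Definition is_attractor (J : Type) (A : set J) (f : J -> V -> V) (K : set V) : Prop :=
  compact K /\ K !=set0 /\ K = \bigcup_(j in A) (f j @` K).

Definition diffuse (J : Type) (A : set J) (f : J -> V -> V) : Prop :=
  exists2 c : R, 0 < c & forall K, is_attractor A f K ->
    forall L, is_hyperplane L -> exists2 j, A j & (f j @` K) `&` open_nbhd L c = set0.

Definition hyperplane_diffuse (E : set V) : Prop :=
  closed E /\
  exists beta : R, exists xi0 : R, 0 < beta /\ 0 < xi0 /\
    forall xi : R, 0 < xi -> xi < xi0 -> forall x, E x ->
      forall L, is_hyperplane L ->
        exists y, [/\ E y, enorm (y - x) < xi & ~ open_nbhd L (beta * xi) y].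
End Defs.

Section Words.
Variables (I : finType) (T : Type).
Definition word_map (phi : I -> T -> T) (w : seq I) : T -> T :=
  foldr (fun i g => phi i \o g) id w.

Definition cylinder (w : seq I) : set (nat -> I) :=
  [set j | mkseq j (size w) = w].

Definition is_section (Pi : seq (seq I)) : Prop :=
  [/\ uniq Pi,
      (forall u v, u \in Pi -> v \in Pi -> u != v -> cylinder u `&` cylinder v = set0)
    & (forall j : nat -> I, exists2 u, u \in Pi & cylinder u j)].
End Words.

(* If K lies in no hyperplane, compactness of the sphere of directions gives
   de > 0 such that every hyperplane L has a point of K at distance >= de from L.
   A cylinder image phi_w K is a similar copy of K with ratio r_w, hence has a point at
   distance >= r_w de from L, while its diameter is at most r_w diam K.  Choosing words
   with r_w comparable to xi (ratios are bounded below) shows that K is hyperplane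
   diffuse; taking all words of one length N with r_w diam K < de/2 gives a section
   whose piece through a far point of K misses the de/2-neighbourhood of L.
   Conversely, both diffuseness properties produce points of K off any hyperplane; for
   a section this uses that K is also the attractor of the section IFS, because every
   point of K has an infinite address. *)

From HB Require Import structures.
From mathcomp Require Import all_boot all_order all_algebra.
From mathcomp Require Import all_classical all_reals all_analysis.
From mathcomp Require Import finmap.
From mathcomp.algebra_tactics Require Import ring lra.
Set Implicit Arguments. Unset Strict Implicit. Unset Printing Implicit Defensive.
Import Order.TTheory GRing.Theory Num.Theory.
Import numFieldNormedType.Exports.
Local Open Scope classical_set_scope.
Local Open Scope ring_scope.

Section EuclideanSpace.
Variables (R : realType) (d : nat).
Notation V := 'rV[R]_d.
Implicit Types (u v w : V).

Lemma dotvC u v : dotv u v = dotv v u.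
Proof. by apply: eq_bigr => k _; rewrite mulrC. Qed.

Lemma dotvDl u v w : dotv (u + v) w = dotv u w + dotv v w.
Proof. by rewrite /dotv -big_split; apply: eq_bigr => k _; rewrite !mxE mulrDl. Qed.

Lemma dotvZl (a : R) u v : dotv (a *: u) v = a * dotv u v.
Proof. by rewrite /dotv mulr_sumr; apply: eq_bigr => k _; rewrite !mxE mulrA. Qed.

Lemma dotvBl u v w : dotv (u - v) w = dotv u w - dotv v w.
Proof. by rewrite dotvDl -scaleN1r dotvZl mulN1r. Qed.

Lemma dotvDr u v w : dotv w (u + v) = dotv w u + dotv w v.
Proof. by rewrite !(dotvC w) dotvDl. Qed.

Lemma dotvZr (a : R) u v : dotv v (a *: u) = a * dotv v u.
Proof. by rewrite !(dotvC v) dotvZl. Qed.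

Lemma dotvBr u v w : dotv w (u - v) = dotv w u - dotv w v.
Proof. by rewrite !(dotvC w) dotvBl. Qed.

Lemma dotv0l u : dotv 0 u = 0.
Proof. by rewrite /dotv big1 // => k _; rewrite mxE mul0r. Qed.

Lemma dotvBB u v : dotv (u - v) (u - v) = dotv u u - 2 * dotv u v + dotv v v.
Proof. rewrite dotvBl !dotvBr (dotvC v u); ring. Qed.

Lemma dotvv_ge0 u : 0 <= dotv u u.
Proof. by apply: sumr_ge0 => k _; rewrite -expr2 sqr_ge0. Qed.

Lemma dotvv_eq0 u : dotv u u = 0 -> u = 0.
Proof.
move=> uu0; apply/rowP => k; rewrite mxE.
have sq0 : \sum_(i < d) u ord0 i ^+ 2 = 0.
  by rewrite -[RHS]uu0; apply: eq_bigr => i _; rewrite expr2.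
have := @psumr_eq0P _ _ xpredT _ (fun i _ => sqr_ge0 (u ord0 i)) sq0 k isT.
by move/eqP; rewrite sqrf_eq0 => /eqP.
Qed.

Lemma dotv_mulmx u v : dotv u v = (u *m v^T) ord0 ord0.
Proof. by rewrite /dotv !mxE; apply: eq_bigr => k _; rewrite mxE. Qed.

Lemma dotv_sumr w (F : 'I_d -> V) : dotv w (\sum_k F k) = \sum_k dotv w (F k).
Proof.
rewrite /dotv; under eq_bigr do rewrite summxE mulr_sumr.
by rewrite exchange_big.
Qed.

Lemma dotv_suml w (F : 'I_d -> V) : dotv (\sum_k F k) w = \sum_k dotv (F k) w.
Proof. by rewrite dotvC dotv_sumr; apply: eq_bigr => k _; rewrite dotvC. Qed.

Lemma dotv_deltal k u : dotv 'e_k u = u ord0 k.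
Proof.
rewrite /dotv (bigD1 k) //= big1 => [|j jk]; first by rewrite !mxE eqxx mul1r addr0.
by rewrite !mxE (negbTE jk) andbF mul0r.
Qed.

Lemma enorm_ge0 u : 0 <= enorm u.
Proof. exact: sqrtr_ge0. Qed.

Lemma sqr_enorm u : enorm u ^+ 2 = dotv u u.
Proof. by rewrite /enorm sqr_sqrtr // dotvv_ge0. Qed.

Lemma enorm_eq0 u : enorm u = 0 -> u = 0.
Proof. by move=> u0; apply: dotvv_eq0; rewrite -sqr_enorm u0 expr0n. Qed.

Lemma enorm_gt0 u : u != 0 -> 0 < enorm u.
Proof. by move=> u0; rewrite lt_def enorm_ge0 andbT; apply: contra_neq u0 => /enorm_eq0. Qed.

Lemma enorm0 : enorm (0 : V) = 0.
Proof. by rewrite /enorm dotv0l sqrtr0. Qed.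

Lemma enormZ (a : R) u : enorm (a *: u) = `|a| * enorm u.
Proof. by rewrite /enorm dotvZl dotvZr mulrA -expr2 sqrtrM ?sqr_ge0 // sqrtr_sqr. Qed.

Lemma sqr_dotv_le u v : dotv u v ^+ 2 <= dotv u u * dotv v v.
Proof.
have [u0|/negbTE uu0] := eqVneq (dotv u u) 0.
  by rewrite (dotvv_eq0 u0) !dotv0l expr0n mul0r.
have A0 : 0 < dotv u u by rewrite lt_def uu0 dotvv_ge0.
set A := dotv u u; set B := dotv u v; set C := dotv v v.
have := dotvv_ge0 ((B / A) *: u - v).
rewrite dotvBl !dotvBr !dotvZl !dotvZr -/A -/B -/C (dotvC v u) -/B => h.
have h2 : 0 <= A * (B / A * (B / A * A) - B / A * B - (B / A * B - C)).
  by apply: mulr_ge0 => //; apply: ltW.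
rewrite -subr_ge0 (_ : A * C - B ^+ 2 = A * (B / A * (B / A * A) - B / A * B - (B / A * B - C))) //.
by field; rewrite gt_eqF.
Qed.

Lemma cauchy_schwarz u v : `|dotv u v| <= enorm u * enorm v.
Proof.
rewrite /enorm -sqrtrM ?dotvv_ge0 // -(sqrtr_sqr (dotv u v)) ler_sqrt.
  exact: sqr_dotv_le.
by rewrite mulr_ge0 ?dotvv_ge0.
Qed.

Lemma mxnorm_le_enorm u : `|u| <= enorm u.
Proof.
rewrite (_ : `|u| = mx_norm u) // mx_normrE; apply/bigmax_leP; split; first exact: enorm_ge0.
move=> [i k] _ /=; rewrite (ord1 i) -sqrtr_sqr ler_sqrt ?dotvv_ge0 //.
rewrite /dotv (bigD1 k) //= -expr2 lerDl.
by apply: sumr_ge0 => j _; rewrite -expr2 sqr_ge0.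
Qed.

Lemma enorm_le_mxnorm u : enorm u <= d%:R * `|u|.
Proof.
have coord_le k : `|u ord0 k| <= `|u|.
  rewrite (_ : `|u| = mx_norm u) // mx_normrE; apply/bigmax_geP; right.
  by exists (ord0, k).
have S0 : 0 <= \sum_k `|u ord0 k| by apply: sumr_ge0.
have le_sum : enorm u <= \sum_k `|u ord0 k|.
  rewrite -(ger0_norm S0) -sqrtr_sqr ler_sqrt ?sqr_ge0 //.
  rewrite expr2 mulr_sumr /dotv; apply: ler_sum => i _.
  have -> : u ord0 i * u ord0 i = `|u ord0 i| * `|u ord0 i|.
    by rewrite -normrM -expr2 ger0_norm // sqr_ge0.
  rewrite (bigD1 i) //= mulrDl lerDl mulr_ge0 //.
  by apply: sumr_ge0.
apply: (le_trans le_sum).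
have -> : d%:R * `|u| = \sum_(k < d) `|u| by rewrite sumr_const card_ord mulr_natl.
by apply: ler_sum => k _.
Qed.

Lemma not_near_hyperplane (a y : V) (b eps : R) : a != 0 ->
  eps * enorm a <= `|dotv a y - b| -> ~ open_nbhd [set x | dotv a x = b] eps y.
Proof.
move=> a0 far [z /= az yz].
have : `|dotv a y - b| < eps * enorm a.
  rewrite -az -dotvBr; apply: le_lt_trans (cauchy_schwarz _ _) _.
  by rewrite [X in _ < X]mulrC ltr_pM2l ?enorm_gt0.
by rewrite ltNge far.
Qed.

Lemma small_set_off_hyperplane (E : set V) (a x : V) (b de : R) : a != 0 ->
  de * enorm a <= `|dotv a x - b| -> (forall z, E z -> enorm (x - z) <= de / 2) ->
  E `&` open_nbhd [set y | dotv a y = b] (de / 2) = set0.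
Proof.
move=> a0 far_x small; apply/seteqP; split => // z [Ez]; apply: not_near_hyperplane a0 _.
have : `|dotv a x - b| <= `|dotv a z - b| + enorm a * enorm (x - z).
  have -> : dotv a x - b = (dotv a z - b) + dotv a (x - z) by rewrite dotvBr; ring.
  by apply: le_trans (ler_normD _ _) _; rewrite lerD2l cauchy_schwarz.
have := ler_wpM2l (enorm_ge0 a) (small z Ez); have := enorm_ge0 a.
lra.
Qed.

End EuclideanSpace.

Section Similarities.
Variables (R : realType) (d : nat).
Notation V := 'rV[R]_d.
Implicit Types (x y : V) (f : V -> V).

Definition is_similarity f (r : R) := forall x y, enorm (f x - f y) = r * enorm (x - y).

Lemma isometry0_dotv f : f 0 = 0 -> is_similarity f 1 ->
  forall x y, dotv (f x) (f y) = dotv x y.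
Proof.
move=> f0 isof x y.
have fnorm z : dotv (f z) (f z) = dotv z z.
  by rewrite -!sqr_enorm -(subr0 (f z)) -f0 isof mul1r subr0.
have fdist : dotv (f x - f y) (f x - f y) = dotv (x - y) (x - y).
  by rewrite -!sqr_enorm isof mul1r.
rewrite !dotvBB !fnorm in fdist; lra.
Qed.

Lemma similarity_affine f r : 0 < r -> is_similarity f r ->
  exists M : 'M[R]_d, M *m M^T = 1%:M /\ forall x, f x = f 0 + r *: (x *m M).
Proof.
move=> r0 simf.
pose g x := r^-1 *: (f x - f 0).
have g0 : g 0 = 0 by rewrite /g subrr scaler0.
have isog : is_similarity g 1.
  move=> x y; rewrite /g -scalerBr opprB addrA subrK enormZ simf mulrA.
  by rewrite ger0_norm ?invr_ge0 ?ltW // mulVf ?gt_eqF.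
have gdot := isometry0_dotv g0 isog.
pose M := \matrix_(k, j) g 'e_k ord0 j.
have rowM k : row k M = g 'e_k by apply/rowP => j; rewrite !mxE.
have ge_orth k l : dotv (g 'e_k) (g 'e_l) = (k == l)%:R.
  by rewrite gdot dotv_deltal !mxE eqxx eq_sym.
have mulM_dotv x w : dotv (x *m M) w = \sum_k x ord0 k * dotv (g 'e_k) w.
  by rewrite mulmx_sum_row dotv_suml; apply: eq_bigr => k _; rewrite rowM dotvZl.
have ge_g x k : dotv (g 'e_k) (g x) = x ord0 k by rewrite gdot dotv_deltal.
have ge_mulM x k : dotv (g 'e_k) (x *m M) = x ord0 k.
  rewrite dotvC mulM_dotv -[RHS]dotv_deltal [in RHS](row_sum_delta x) dotv_sumr.
  apply: eq_bigr => l _.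
  by rewrite dotvZr ge_orth dotvC dotv_deltal !mxE eqxx eq_sym.
have g_linear x : g x = x *m M.
  apply/subr0_eq/dotvv_eq0.
  rewrite dotvBB (dotvC (g x)) !mulM_dotv.
  under eq_bigr do rewrite ge_g.
  under [X in _ + X]eq_bigr do rewrite ge_mulM.
  rewrite gdot /dotv; ring.
exists M; split.
  apply/matrixP => k l; rewrite !mxE -(ge_orth k l).
  by apply: eq_bigr => j _; rewrite !mxE.
by move=> x; rewrite -g_linear /g scalerA mulfV ?gt_eqF // scale1r addrC subrK.
Qed.

Lemma dotv_similarity f r : 0 < r -> is_similarity f r -> forall a : V,
  exists2 a' : V, enorm a' = enorm a & forall x, dotv a (f x) = dotv a (f 0) + r * dotv a' x.
Proof.
move=> r0 simf a.
have [M [MMT fM]] := similarity_affine r0 simf.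
exists (a *m M^T).
  rewrite /enorm !dotv_mulmx trmx_mul trmxK mulmxA -(mulmxA a) mulmx1C //.
  by rewrite mulmx1.
by move=> x; rewrite fM dotvDr dotvZr !dotv_mulmx trmx_mul mulmxA.
Qed.

End Similarities.

Section Width.
Variables (R : realType) (d : nat).
Notation V := 'rV[R]_d.
Implicit Types (K : set V).

Definition in_hyperplane K := exists L, is_hyperplane L /\ K `<=` L.

Definition far_from_hyperplanes K (de : R) := forall (a : V) (b : R), a != 0 ->
  exists2 x, K x & de * enorm a <= `|dotv a x - b|.

Lemma finite_pos_lower_bound (T : eqType) (s : seq T) (g : T -> R) :
  (forall i, i \in s -> 0 < g i) -> exists2 e : R, 0 < e & forall i, i \in s -> e <= g i.
Proof.
elim: s => [|a s IH] gpos; first by exists 1.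
have [e e0 le_e] := IH (fun i si => gpos i (mem_behead (s := a :: s) si)).
exists (Num.min e (g a)); first by rewrite lt_min e0 gpos ?mem_head.
move=> i; rewrite in_cons => /orP[/eqP ->|si]; first by rewrite ge_min lexx orbT.
by rewrite ge_min le_e.
Qed.

Lemma continuous_normr_dotvl (w : V) : continuous (fun a : V => `|dotv a w|).
Proof.
have lip u v : `|dotv u w - dotv v w| <= d%:R * enorm w * `|u - v|.
  rewrite -dotvBl; have := enorm_le_mxnorm (u - v); have := enorm_ge0 w.
  have := cauchy_schwarz (u - v) w; nra.
have c0 : 0 < d%:R * enorm w + 1 by rewrite ltr_wpDl ?mulr_ge0 ?enorm_ge0.
move=> a; apply/(@cvgrPdist_lt _ _ _ (nbhs a) (nbhs_filter a)) => e e0.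
apply/nbhs_ballP; exists (e / (d%:R * enorm w + 1)) => /=; first by rewrite divr_gt0.
move=> b; rewrite -ball_normE /= ltr_pdivlMr // => ab.
apply: le_lt_trans (ler_dist_dist _ _) _; apply: le_lt_trans (lip _ _) _.
have := normr_ge0 (a - b); have : 0 <= d%:R * enorm w by rewrite mulr_ge0 ?enorm_ge0.
nra.
Qed.

Lemma compact_unit_sphere : compact [set a : V | `|a| = 1].
Proof.
apply: bounded_closed_compact.
  apply: filterS (nbhs_pinfty_ge (r := 1) _) => // M M1 x /= ->.
  exact: M1.
exact: (continuous_closedP _).1 (@norm_continuous _ _) _ (closed_eq (y := 1)).
Qed.

Lemma not_in_hyperplane_dotv K p (a : V) : ~ in_hyperplane K -> a != 0 ->
  exists2 x, K x & dotv a x != dotv a p.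
Proof.
move=> nL a0; apply: contrapT => allp; apply: nL.
exists [set x | dotv a x = dotv a p]; split; first by exists a, (dotv a p).
by move=> x Kx /=; apply: contrapT => /eqP xp; apply: allp; exists x.
Qed.

(* Compactness of the unit sphere makes the positive gap [|<a, x - p>|]
   uniform in the direction [a]. *)
Lemma not_in_hyperplane_unit_gap K p : ~ in_hyperplane K ->
  exists2 e : R, 0 < e & forall a : V, `|a| = 1 -> exists2 x, K x & e < `|dotv a (x - p)|.
Proof.
move=> nL.
pose D := [set q : V * R | K q.1 /\ 0 < q.2].
pose F (q : V * R) := [set a : V | q.2 < `|dotv a (q.1 - p)|].
have F_open q : D q -> open (F q).
  move=> _; apply: (@open_comp _ _ (fun a : V => `|dotv a (q.1 - p)|) [set x | q.2 < x]).
    by move=> a _; apply: continuous_normr_dotvl.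
  exact: open_gt.
have cover_sphere : [set a : V | `|a| = 1] `<=` cover D F.
  move=> a a1; have a0 : a != 0 by rewrite -normr_gt0 a1.
  have [x Kx xp] := not_in_hyperplane_dotv p nL a0.
  have gap0 : 0 < `|dotv a (x - p)| by rewrite normr_gt0 dotvBr subr_eq0.
  exists (x, `|dotv a (x - p)| / 2); first by split; rewrite //= divr_gt0.
  by rewrite /F /= gtr_pMr ?invf_lt1 ?ltr1n.
have sphere_cover : cover_compact [set a : V | `|a| = 1].
  by rewrite -compact_cover; exact: compact_unit_sphere.
have [D' D'D finite_cover] := sphere_cover _ D F F_open cover_sphere.
have D'_D q : q \in D' -> D q by move=> /D'D /set_mem.
have [e e0 le_e] := finite_pos_lower_bound (fun q qD' => (D'_D q qD').2).
exists e => // a a1.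
have [[x eta] /= qD' Fx] := finite_cover a a1.
by exists x; [exact: (D'_D _ qD').1 | exact: le_lt_trans (le_e _ qD') Fx].
Qed.

Lemma not_in_hyperplane_far K : K !=set0 -> ~ in_hyperplane K ->
  exists2 de : R, 0 < de & far_from_hyperplanes K de.
Proof.
move=> [p Kp] nL; have [e e0 gap] := not_in_hyperplane_unit_gap p nL.
have d1 : 0 < d%:R + 1 :> R by rewrite ltr_wpDl.
exists (e / 2 / (d%:R + 1)) => [|a b a0]; first by rewrite !divr_gt0.
have na : 0 < `|a| by rewrite normr_gt0.
have [x Kx gapx] : exists2 x, K x & e < `|dotv (`|a|^-1 *: a) (x - p)|.
  by apply: gap; rewrite normrZ normrV ?unitfE ?gt_eqF // normr_id mulVf ?gt_eqF.
have {}gapx : e * `|a| < `|(dotv a x - b) - (dotv a p - b)|.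
  rewrite dotvZl dotvBr normrM normrV ?unitfE ?gt_eqF // normr_id in gapx.
  by rewrite -ltr_pdivlMr // -[X in _ < X]mulrC; congr (_ < _ * `|_|): gapx; ring.
have tri := ler_normB (dotv a x - b) (dotv a p - b).
have ena : e / 2 / (d%:R + 1) * enorm a <= e / 2 * `|a|.
  have enorm_le : enorm a <= (d%:R + 1) * `|a|.
    by apply: le_trans (enorm_le_mxnorm a) _; rewrite ler_wpM2r ?lerDl.
  apply: le_trans (ler_wpM2l _ enorm_le) _; first by rewrite !divr_ge0 ?ltW.
  by rewrite mulrA divfK ?gt_eqF.
have [far_x|near_x] := leP (e / 2 * `|a|) `|dotv a x - b|.
  by exists x => //; apply: le_trans far_x.
by exists p => //; apply: le_trans ena _; lra.
Qed.

Lemma far_from_hyperplanes_similarity (f : V -> V) rho K de :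
  0 < rho -> is_similarity f rho ->
  far_from_hyperplanes K de -> far_from_hyperplanes (f @` K) (rho * de).
Proof.
move=> rho0 simf farK a b a0.
have [a' ea' f_dotv] := dotv_similarity rho0 simf a.
have a'0 : a' != 0.
  by apply/eqP => a'_0; move: (enorm_gt0 a0); rewrite -ea' a'_0 enorm0 ltxx.
have [k Kk far_k] := farK a' ((b - dotv a (f 0)) / rho) a'0.
exists (f k); first by exists k.
have -> : dotv a (f k) - b = rho * (dotv a' k - (b - dotv a (f 0)) / rho).
  by rewrite f_dotv; field; rewrite gt_eqF.
by rewrite normrM gtr0_norm // -mulrA ler_pM2l // -ea'.
Qed.

Lemma hyperplane_diffuse_not_in_hyperplane K : K !=set0 -> hyperplane_diffuse K -> ~ in_hyperplane K.
Proof.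
move=> [x Kx] [_ [beta [xi0 [beta0 [xi00 diffK]]]]] [L [hypL KL]].
have xi_gt0 : 0 < xi0 / 2 by rewrite divr_gt0.
have xi_lt : xi0 / 2 < xi0 by rewrite ltr_pdivrMr // ltr_pMr // ltr1n.
have [y [Ky _ farL]] := diffK _ xi_gt0 xi_lt x Kx L hypL.
by apply: farL; exists y; [exact: KL | rewrite subrr enorm0 mulr_gt0].
Qed.

End Width.

Section Attractors.
Variables (R : realType) (d : nat).
Notation V := 'rV[R]_d.

Lemma geometric_lt (s C e : R) : 0 <= s -> s < 1 -> 0 < e -> 0 <= C ->
  exists m : nat, s ^+ m * C < e.
Proof.
move=> s0 s1 e0 C0; have C1 : 0 < C + 1 by rewrite ltr_wpDl.
have s_norm1 : `|s| < 1 by rewrite ger0_norm.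
have [N _ hN] := (cvgrPdist_lt _ _).1 (cvg_expr s_norm1) _ (divr_gt0 e0 C1).
exists N; have := hN N (leqnn N).
rewrite /= sub0r normrN ger0_norm ?exprn_ge0 // ltr_pdivlMr // => lt_e.
by apply: le_lt_trans lt_e; rewrite ler_wpM2l ?exprn_ge0 ?lerDl.
Qed.

Lemma compact_enorm_diam (K : set V) : compact K ->
  exists C : R, 0 <= C /\ forall x y, K x -> K y -> enorm (x - y) <= C.
Proof.
move=> /compact_bounded [M [Mreal KM]].
have KM1 x : K x -> `|x| <= `|M| + 1.
  by apply: KM; rewrite (le_lt_trans (real_ler_norm Mreal)) // ltrDl.
exists (d%:R * ((`|M| + 1) + (`|M| + 1))); split; first by rewrite mulr_ge0 ?addr_ge0.
move=> x y Kx Ky; apply: le_trans (enorm_le_mxnorm _) _.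
by rewrite ler_wpM2l // (le_trans (ler_normB _ _)) // lerD ?KM1.
Qed.

Lemma closed_enorm_adherent (E : set V) x : closed E ->
  (forall e, 0 < e -> exists2 z, E z & enorm (x - z) < e) -> E x.
Proof.
move=> clE near_x; apply: clE => B /nbhs_ballP [e e0 eB].
have [z Ez xz] := near_x e e0.
exists z; split => //; apply: eB.
by rewrite -ball_normE /=; apply: le_lt_trans (mxnorm_le_enorm _) xz.
Qed.

Section UniformContraction.
Variables (J : Type) (A : set J) (f : J -> V -> V) (s : R).
Hypothesis s_ge0 : 0 <= s.
Hypothesis s_lt1 : s < 1.
Hypothesis f_contract :
  forall j, A j -> forall x y, enorm (f j x - f j y) <= s * enorm (x - y).

Lemma attractor_iterate (K1 K2 : set V) m x :
  is_attractor A f K1 -> is_attractor A f K2 -> K1 x ->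
  exists h : V -> V, [/\ exists2 y, K1 y & x = h y, forall z, K2 z -> K2 (h z)
    & forall u v, enorm (h u - h v) <= s ^+ m * enorm (u - v)].
Proof.
move=> [_ [_ eK1]] [_ [_ eK2]]; elim: m x => [|m IH] x K1x.
  exists id; split => //; first by exists x.
  by move=> u v; rewrite expr0 mul1r.
move: K1x; rewrite {1}eK1 => -[j Aj [x' K1x' <-]].
have [h [[y K1y ->] hK2 h_lip]] := IH x' K1x'.
exists (f j \o h); split; first by exists y.
  by move=> z K2z /=; rewrite eK2; exists j => //; exists (h z); [exact: hK2 |].
move=> u v /=; apply: le_trans (f_contract Aj _ _) _.
by rewrite exprS -mulrA ler_wpM2l.
Qed.

Lemma attractor_unique (K1 K2 : set V) :
  is_attractor A f K1 -> is_attractor A f K2 -> K1 = K2.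
Proof.
suff sub K K' : is_attractor A f K -> is_attractor A f K' -> K `<=` K'.
  by move=> K1A K2A; apply/seteqP; split; apply: sub.
move=> KA K'A; have [cK _] := KA; have [cK' [[y0 K'y0] _]] := K'A.
have [C [C0 diamC]] := compact_enorm_diam (compactU cK cK').
move=> x Kx; apply: closed_enorm_adherent; first exact: compact_closed cK'.
move=> e e0; have [m smC] := geometric_lt s_ge0 s_lt1 e0 C0.
have [h [[y Ky ->] hK' h_lip]] := attractor_iterate m KA K'A Kx.
exists (h y0); first exact: hK'.
apply: le_lt_trans (h_lip _ _) (le_lt_trans _ smC).
by rewrite ler_wpM2l ?exprn_ge0 ?diamC //; [left | right].
Qed.

End UniformContraction.

End Attractors.

Section Words.
Variable I : finType.

Definition words_of_size n : seq (seq I) := [seq val t | t <- enum {: n.-tuple I}].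

Lemma mem_words_of_size n w : (w \in words_of_size n) = (size w == n).
Proof.
apply/mapP/eqP => [[t _ ->]|wn]; first exact: size_tuple.
by exists (Tuple (introT eqP wn)); rewrite ?mem_enum.
Qed.

Lemma words_of_size_section n : is_section (words_of_size n).
Proof.
split.
- by rewrite map_inj_uniq ?enum_uniq //; exact: val_inj.
- move=> u v; rewrite !mem_words_of_size => /eqP un /eqP vn /eqP uv.
  by apply/seteqP; split => // j [/= ju jv]; apply: uv; rewrite -ju -jv un vn.
- by move=> j; exists (mkseq j n); rewrite /cylinder ?mem_words_of_size size_mkseq.
Qed.

Lemma word_map_rcons (T : Type) (phi : I -> T -> T) w i x :
  word_map phi (rcons w i) x = word_map phi w (phi i x).
Proof. by elim: w => //= i' w IH; rewrite IH. Qed.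

End Words.

Section IteratedFunctionSystem.
Variables (R : realType) (d : nat) (I : finType).
Notation V := 'rV[R]_d.
Variables (phi : I -> V -> V) (K : set V).
Hypothesis K_attractor : is_attractor [set: I] phi K.

Lemma word_map_attractor w x : K x -> K (word_map phi w x).
Proof.
have [_ [_ eK]] := K_attractor.
elim: w => [|i w IH] //= Kx; rewrite eK; exists i => //.
by exists (word_map phi w x); [exact: IH |].
Qed.

Lemma attractor_preimage x : K x -> exists i, exists2 y, K y & x = phi i y.
Proof.
have [_ [_ eK]] := K_attractor.
by rewrite {1}eK => -[i _ [y Ky <-]]; exists i, y.
Qed.

Lemma attractor_address x : K x ->
  exists j : nat -> I, forall n, exists2 y, K y & x = word_map phi (mkseq j n) y.
Proof.
move=> Kx; have [i0 _] := attractor_preimage Kx.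
have step z : exists p : I * V, K z -> K p.2 /\ z = phi p.1 p.2.
  have [Kz|nKz] := pselect (K z); last by exists (i0, z).
  by have [i [y Ky ->]] := attractor_preimage Kz; exists (i, y).
have [F hF] := choice step.
pose xs n := iter n (fun z => (F z).2) x.
have Kxs n : K (xs n) by elim: n => [|n IH] //=; exact: (hF _ IH).1.
exists (fun n => (F (xs n)).1) => n; exists (xs n) => //.
elim: n => [|n IH] //; rewrite mkseqS word_map_rcons /=.
by rewrite -(hF _ (Kxs n)).2.
Qed.

Lemma section_attractor Pi : is_section Pi -> is_attractor [set w | w \in Pi] (word_map phi) K.
Proof.
move=> [_ _ covered]; have [cK [K0 _]] := K_attractor; split => //; split => //.
apply/seteqP; split => [x Kx|x [w _ [y Ky <-]]]; last exact: word_map_attractor.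
have [j addr] := attractor_address Kx; have [u uPi ju] := covered j.
have [y Ky ->] := addr (size u); exists u => //; exists y => //.
by rewrite ju.
Qed.

Definition section_diffuse :=
  exists Pi : seq (seq I), is_section Pi /\ diffuse [set w | w \in Pi] (word_map phi).

Lemma section_diffuse_not_in_hyperplane : section_diffuse -> ~ in_hyperplane K.
Proof.
move=> [Pi [secPi [c c0 diffPi]]] [L [hypL KL]].
have [w _ disj] := diffPi K (section_attractor secPi) L hypL.
have [_ [[x Kx] _]] := K_attractor.
suff : (word_map phi w @` K `&` open_nbhd L c) (word_map phi w x) by rewrite disj.
split; first by exists x.
exists (word_map phi w x); first exact/KL/word_map_attractor.
by rewrite subrr enorm0.
Qed.

End IteratedFunctionSystem.

Section SimilarityIFS.
Variables (R : realType) (d : nat) (I : finType).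
Notation V := 'rV[R]_d.
Variables (phi : I -> V -> V) (K : set V) (ratio : I -> R).
Hypothesis phi_sim : forall i, 0 < ratio i /\ ratio i < 1 /\ is_similarity (phi i) (ratio i).

Definition word_ratio (w : seq I) : R := foldr (fun i r => ratio i * r) 1 w.

Lemma word_ratio_gt0 w : 0 < word_ratio w.
Proof. by elim: w => [|i w IH] //=; rewrite mulr_gt0 ?(phi_sim i).1. Qed.

Lemma word_map_similarity w : is_similarity (word_map phi w) (word_ratio w).
Proof.
elim: w => [|i w IH] x y /=; first by rewrite mul1r.
by have [_ [_ ->]] := phi_sim i; rewrite IH mulrA.
Qed.

Lemma ratio_lower_bound : exists2 m : R, 0 < m & forall i, m <= ratio i.
Proof.
have [m m0 le_m] := @finite_pos_lower_bound R _ (enum I) ratio (fun i _ => (phi_sim i).1).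
by exists m => // i; rewrite le_m ?mem_enum.
Qed.

Lemma ratio_upper_bound : exists2 s : R, 0 <= s /\ s < 1 & forall i, ratio i <= s.
Proof.
have gap_gt0 i : i \in enum I -> 0 < 1 - ratio i by rewrite subr_gt0 (phi_sim i).2.1.
have [e e0 le_e] := finite_pos_lower_bound gap_gt0.
have [min_e min_1 min_gt0] : [/\ Num.min e 1 <= e, Num.min e 1 <= 1 & 0 < Num.min e 1].
  by rewrite !ge_min !lexx orbT lt_min e0 ltr01.
exists (1 - Num.min e 1); first by split; lra.
by move=> i; have := le_e i (mem_enum I i); lra.
Qed.

Lemma word_ratio_le s : 0 <= s -> (forall i, ratio i <= s) -> forall w, word_ratio w <= s ^+ size w.
Proof.
move=> s0 le_s; elim => [|i w IH] /=; first by rewrite expr0.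
by rewrite exprS ler_pM ?(ltW (phi_sim i).1) ?(ltW (word_ratio_gt0 w)).
Qed.

Lemma word_map_lipschitz s : 0 <= s -> (forall i, ratio i <= s) -> forall w x y,
  enorm (word_map phi w x - word_map phi w y) <= s ^+ size w * enorm (x - y).
Proof.
move=> s0 le_s w x y; rewrite word_map_similarity; apply: ler_pM => //.
- exact: ltW (word_ratio_gt0 w).
- exact: enorm_ge0.
- exact: word_ratio_le.
Qed.

Hypothesis K_attractor : is_attractor [set: I] phi K.

(* Peel off letters while the ratio exceeds t: since every letter shrinks by at least
   [m0], the first ratio below [t] is still at least [m0 * t]. *)
Lemma word_ratio_between (m0 : R) : 0 < m0 -> (forall i, m0 <= ratio i) ->
  forall t : R, 0 < t -> t <= 1 -> forall x, K x ->
  exists v, (exists2 y, K y & x = word_map phi v y) /\ m0 * t <= word_ratio v <= t.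
Proof.
move=> m00 le_m0 t t0 t1.
have [s [s0 s1] le_s] := ratio_upper_bound.
have [n] := geometric_lt s0 s1 t0 ler01; rewrite mulr1.
elim: n t t0 t1 => [|n IH] t t0 t1 sn_t x Kx.
  by move: (lt_le_trans sn_t t1); rewrite expr0 ltxx.
have [i [y Ky ->]] := attractor_preimage K_attractor Kx.
have [ri0 [ri1 _]] := phi_sim i.
have [ri_t|t_ri] := leP (ratio i) t.
  exists [:: i]; split; first by exists y.
  by rewrite /= mulr1 ri_t (le_trans _ (le_m0 i)) // ger_pMr.
have t'0 : 0 < t / ratio i by rewrite divr_gt0.
have t'1 : t / ratio i <= 1 by rewrite ler_pdivrMr // mul1r ltW.
have sn_t' : s ^+ n < t / ratio i.
  rewrite ltr_pdivlMr //; apply: le_lt_trans sn_t.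
  by rewrite exprS [s * _]mulrC ler_wpM2l ?exprn_ge0 ?le_s.
have [v [[z Kz ->] /andP[lo hi]]] := IH _ t'0 t'1 sn_t' y Ky.
exists (i :: v); split; first by exists z.
rewrite /= [ratio i * _]mulrC; apply/andP; split.
  by rewrite -ler_pdivrMr // -mulrA.
by rewrite -ler_pdivlMr.
Qed.

Lemma not_in_hyperplane_hyperplane_diffuse : ~ in_hyperplane K -> hyperplane_diffuse K.
Proof.
move=> nL; have [cK [K0 _]] := K_attractor.
have [de de0 farK] := not_in_hyperplane_far K0 nL.
have [C [C0 diamC]] := compact_enorm_diam cK.
have [m0 m00 le_m0] := ratio_lower_bound.
have C1 : 0 < C + 1 by rewrite ltr_wpDl.
split; first exact: compact_closed cK.
exists (m0 * de / (C + 1)), (C + 1); split; first by rewrite divr_gt0 ?mulr_gt0.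
split=> // xi xi0 xiC x Kx _ [a [b [a0 ->]]].
pose t := xi / (C + 1).
have [t0 t1] : 0 < t /\ t <= 1 by rewrite divr_gt0 // ler_pdivrMr // mul1r ltW.
have [v [[y Ky ->] /andP[lo hi]]] := word_ratio_between m00 le_m0 t0 t1 Kx.
have [_ [k Kk <-] far_k] := far_from_hyperplanes_similarity
  (word_ratio_gt0 v) (word_map_similarity v) farK b a0.
exists (word_map phi v k); split; first exact: (word_map_attractor K_attractor).
  rewrite word_map_similarity; apply: le_lt_trans (ler_pM _ _ hi (diamC _ _ Kk Ky)) _.
  - exact: ltW (word_ratio_gt0 v).
  - exact: enorm_ge0.
  have C1_neq0 : C + 1 != 0 by rewrite gt_eqF.
  by rewrite -[X in _ < X](divfK C1_neq0) -/t ltr_pM2l // ltrDl.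
apply: not_near_hyperplane a0 (le_trans _ far_k).
have -> : m0 * de / (C + 1) * xi = m0 * t * de by rewrite /t; field; rewrite gt_eqF.
have := mulr_ge0 (ltW de0) (enorm_ge0 a); nra.
Qed.

Lemma not_in_hyperplane_section_diffuse : ~ in_hyperplane K -> section_diffuse phi.
Proof.
rewrite /section_diffuse => nL; have [cK [K0 _]] := K_attractor.
have [de de0 farK] := not_in_hyperplane_far K0 nL.
have [C [C0 diamC]] := compact_enorm_diam cK.
have [s [s0 s1] le_s] := ratio_upper_bound.
have de2 : 0 < de / 2 by rewrite divr_gt0.
have [n snC] := geometric_lt s0 s1 de2 C0.
have sNC : s ^+ n.+1 * C < de / 2.
  apply: le_lt_trans snC; apply: ler_pM => //; first exact: exprn_ge0.
  by rewrite exprS; apply: ler_piMl; [exact: exprn_ge0 | exact: ltW].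
have word_contract w : w \in words_of_size I n.+1 -> forall x y,
    enorm (word_map phi w x - word_map phi w y) <= s ^+ n.+1 * enorm (x - y).
  by rewrite mem_words_of_size => /eqP <-; exact: word_map_lipschitz.
exists (words_of_size I n.+1); split; first exact: words_of_size_section.
exists (de / 2) => // K' K'_attr _ [a [b [a0 ->]]].
have sN0 : 0 <= s ^+ n.+1 by rewrite exprn_ge0.
have sN1 : s ^+ n.+1 < 1 by rewrite exprn_ilt1.
have <- := attractor_unique sN0 sN1 word_contract
  (section_attractor K_attractor (words_of_size_section I n.+1)) K'_attr.
have [x Kx far_x] := farK a b a0.
have [j addr] := attractor_address K_attractor Kx; have [y Ky x_y] := addr n.+1.
exists (mkseq j n.+1); first by rewrite /= mem_words_of_size size_mkseq.
apply: (small_set_off_hyperplane a0 far_x) => _ [k Kk <-].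
rewrite x_y; apply: ltW (le_lt_trans (word_map_lipschitz s0 le_s _ _ _) _).
by rewrite size_mkseq; apply: le_lt_trans sNC; rewrite ler_wpM2l ?exprn_ge0 ?diamC.
Qed.

End SimilarityIFS.

Theorem theorem3p12 (R : realType) (d : nat) (I : finType)
  (phi : I -> 'rV[R]_d -> 'rV[R]_d) (K : set 'rV[R]_d)
  (hphi : forall i, contracting_similarity (phi i))
  (hK : is_attractor [set: I] phi K) :
  ((~ exists L, is_hyperplane L /\ K `<=` L) <->
     (exists Pi : seq (seq I), is_section Pi /\
        diffuse [set w | w \in Pi] (word_map phi))) /\
  ((exists Pi : seq (seq I), is_section Pi /\
        diffuse [set w | w \in Pi] (word_map phi)) <->
     hyperplane_diffuse K).
Proof.
have [ratio phi_sim] := choice hphi.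
have [_ [K0 _]] := hK.
have to_section := not_in_hyperplane_section_diffuse phi_sim hK.
have from_section := section_diffuse_not_in_hyperplane hK.
have to_diffuse := not_in_hyperplane_hyperplane_diffuse phi_sim hK.
have from_diffuse := hyperplane_diffuse_not_in_hyperplane K0.
split; split.
- exact: to_section.
- exact: from_section.
- by move/from_section/to_diffuse.
- by move/from_diffuse/to_section.
Qed.
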